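(* Consider the Joint Randomized Response (JRR) mechanism described in the context, with parameters $0.5<p\le 1$, $q=1-p$ and $1-1/p\le\rho\le 1$, applied to $n$ contributors (with $n$ even) holding binary values $x_1,\dots,x_n\in\{0,1\}$. For $v\in\{0,1\}$ let $n_v$ be the number of contributors with $x_j=v$ and let $I_v$ be the number of reported values $y_j$ equal to $v$. Then the estimator $$\hat n_v=\frac{I_v-nq}{p-q}$$ is an unbiased estimator of $n_v$, i.e. $\mathrm{E}[\hat n_v]=n_v$, for each $v\in\{0,1\}$.
   Context: JRR mechanism: the $n$ contributors are partitioned uniformly at random into $n/2$ disjoint groups of two. In each group $\{u_a,u_b\}$ a pair of indicator variables $(T_a,T_b)\in\{0,1\}^2$ is drawn, independently across groups, with joint distribution $\Pr[T_a=1,T_b=1]=p^2+\rho pq$, $\Pr[T_a=1,T_b=0]=\Pr[T_a=0,T_b=1]=(1-\rho)pq$, $\Pr[T_a=0,T_b=0]=q^2+\rho pq$. Each contributor $u_j$ reports $y_j=x_j$ if $T_j=1$ and $y_j=1-x_j$ if $T_j=0$. *)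

From mathcomp Require Import all_boot all_order all_algebra all_fingroup.
Set Implicit Arguments. Unset Strict Implicit. Unset Printing Implicit Defensive.
Import Order.TTheory GRing.Theory Num.Theory.
Local Open Scope ring_scope.

(* Values in {0,1} are encoded as bool (false = 0, true = 1). *)

(* A partition of the n contributors into disjoint groups of two is encoded
   as a fixed-point-free involution s of 'I_n: the groups are {i, s i}. *)
Definition is_pairing (n : nat) (s : {perm 'I_n}) : bool :=
  [forall i, (s (s i) == i) && (s i != i)].

Definition pairings (n : nat) : {set {perm 'I_n}} := [set s | is_pairing s].

(* Joint distribution of (T_a, T_b) in one group. *)
Definition jrr_pair_pmf (R : pzRingType) (p rho : R) (a b : bool) : R :=
  let q := 1 - p in
  if a then (if b then p ^+ 2 + rho * p * q else (1 - rho) * p * q)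
  else (if b then (1 - rho) * p * q else q ^+ 2 + rho * p * q).

(* Probability of the indicator vector T given the pairing s: independent
   across groups; each group {i, s i} is counted once (for i < s i). *)
Definition jrr_T_prob (R : pzRingType) (n : nat) (p rho : R) (s : {perm 'I_n})
  (T : {ffun 'I_n -> bool}) : R :=
  \prod_(i : 'I_n | (i < s i)%N) jrr_pair_pmf p rho (T i) (T (s i)).

Definition jrr_report (n : nat) (x T : {ffun 'I_n -> bool}) (j : 'I_n) : bool :=
  if T j then x j else ~~ x j.

Definition count_reports (n : nat) (x T : {ffun 'I_n -> bool}) (v : bool) : nat :=
  #|[set j | jrr_report x T j == v]|.

Definition count_values (n : nat) (x : {ffun 'I_n -> bool}) (v : bool) : nat :=
  #|[set j | x j == v]|.

Definition jrr_expect (R : fieldType) (n : nat) (p rho : R)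
  (X : {perm 'I_n} -> {ffun 'I_n -> bool} -> R) : R :=
  (#|pairings n|%:R)^-1 *
  \sum_(s in pairings n) \sum_(T : {ffun 'I_n -> bool}) jrr_T_prob p rho s T * X s T.

From mathcomp Require Import all_boot all_order all_algebra all_fingroup.
From mathcomp Require Import ring lra zify.
Import Order.TTheory GRing.Theory Num.Theory.
Set Implicit Arguments.
Unset Strict Implicit.
Unset Printing Implicit Defensive.
Local Open Scope ring_scope.

(* Unbiasedness only needs the marginals of the mechanism: whatever the
   pairing s and whatever the correlation rho, each T_j is 1 with
   probability p, so y_j = v with probability p if x_j = v and q otherwise.
   By linearity E[I_v | s] = n_v p + (n - n_v) q = n_v (p - q) + n q, and
   the estimator is exactly the affine correction of this.  Computing the
   marginal amounts to summing out all groups but the one containing j,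
   which is possible because the law of T factorizes over the groups. *)

Section Pairing.
Variables (n : nat) (s : {perm 'I_n}).
Hypothesis s_pairing : is_pairing s.

Lemma pairingK : involutive s.
Proof. by move=> i; move/forallP: s_pairing => /(_ i) /andP[/eqP]. Qed.

Lemma pairing_neq i : s i != i.
Proof. by move/forallP: s_pairing => /(_ i) /andP[]. Qed.

Lemma pairing_ltn_swap i : (s i < s (s i))%N = ~~ (i < s i)%N.
Proof. by rewrite pairingK; have := pairing_neq i; rewrite -val_eqE /=; lia. Qed.

(* Each T is coded by the pairs (T i, T (s i)) at the representatives
   i < s i of the groups, which turns the sum of products into a product of
   sums. *)
Lemma sum_ffun_prod_pairs (R : comPzRingType) (F : 'I_n -> bool -> bool -> R) :
  \sum_(T : {ffun 'I_n -> bool}) \prod_(i : 'I_n | (i < s i)%N) F i (T i) (T (s i))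
  = \prod_(i : 'I_n | (i < s i)%N) \sum_(a : bool) \sum_(c : bool) F i a c.
Proof.
under [RHS]eq_bigr do rewrite pair_bigA /=.
rewrite (big_distr_big (false, false) _ predT) /=.
pose code (T : {ffun 'I_n -> bool}) : {ffun 'I_n -> bool * bool} :=
  [ffun i : 'I_n => if (i < s i)%N then (T i, T (s i)) else (false, false)].
pose decode (f : {ffun 'I_n -> bool * bool}) : {ffun 'I_n -> bool} :=
  [ffun i : 'I_n => if (i < s i)%N then (f i).1 else (f (s i)).2].
rewrite (reindex code) /=; last first.
  exists decode => [T _ | f /pffun_onP[/subsetP f_supp _]];
    apply/ffunP => i; rewrite !ffunE.
    by case: ifP => [-> // | /negbT i_rep]; rewrite pairing_ltn_swap i_rep pairingK.
  case: ifP => [i_rep | /negbT i_rep].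
    by rewrite i_rep pairing_ltn_swap i_rep pairingK; case: (f i).
  case: (f i =P (false, false)) => [-> // | /eqP f_i].
  by have := f_supp i; rewrite !unfold_in /= (negbTE i_rep) f_i => /(_ isT).
apply: eq_big => [T | T _].
  symmetry; apply/pffun_onP; split=> //.
  by apply/subsetP => i; rewrite !inE ffunE; case: ifP.
by apply: eq_bigr => i i_rep; rewrite ffunE i_rep.
Qed.

Lemma prod_pairing_at (R : comPzRingType) (j : 'I_n) (a : R) (H : 'I_n -> R) :
  (forall i : 'I_n, (i < s i)%N -> H i = if (i == j) || (i == s j) then a else 1) ->
  \prod_(i : 'I_n | (i < s i)%N) H i = a.
Proof.
move=> H_at.
have [j_rep | j_rep] := boolP (j < s j)%N.
  rewrite (bigD1 j) //= H_at ?eqxx // big1 ?mulr1 // => i /andP[i_rep i_j].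
  rewrite H_at // (negbTE i_j) /=; case: eqP => // i_sj.
  by move: i_rep; rewrite i_sj pairingK; lia.
rewrite (bigD1 (s j)) /= ?pairing_ltn_swap // H_at ?pairing_ltn_swap ?eqxx ?orbT //.
rewrite big1 ?mulr1 // => i /andP[i_rep i_sj].
rewrite H_at // (negbTE i_sj) orbF; case: eqP => // i_j.
by move: i_rep; rewrite i_j (negbTE j_rep).
Qed.

End Pairing.

Lemma jrr_report_eq n (x T : {ffun 'I_n -> bool}) j v :
  (jrr_report x T j == v) = (T j == (x j == v)).
Proof. by rewrite /jrr_report; case: (T j); case: (x j); case: v. Qed.

Lemma natr_card_set (R : pzSemiRingType) (T : finType) (P : pred T) :
  #|[set t | P t]|%:R = \sum_t (P t)%:R :> R.
Proof.
rewrite -sum1_card natr_sum big_mkcond /=.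
by apply: eq_bigr => t _; rewrite inE; case: (P t).
Qed.

Section JRR.
Variables (R : comPzRingType) (p rho : R).
Local Notation pmf := (jrr_pair_pmf p rho).

Lemma pair_pmf_sum : \sum_(a : bool) \sum_(c : bool) pmf a c = 1.
Proof. rewrite !big_bool /jrr_pair_pmf /=; ring. Qed.

Lemma pair_pmf_fst b :
  \sum_(a : bool) \sum_(c : bool) pmf a c * (a == b)%:R = if b then p else 1 - p.
Proof. rewrite !big_bool /jrr_pair_pmf; case: b => /=; ring. Qed.

Lemma pair_pmf_snd b :
  \sum_(a : bool) \sum_(c : bool) pmf a c * (c == b)%:R = if b then p else 1 - p.
Proof. rewrite !big_bool /jrr_pair_pmf; case: b => /=; ring. Qed.

Variables (n : nat) (s : {perm 'I_n}).
Hypothesis s_pairing : is_pairing s.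

Lemma jrr_T_prob_sum : \sum_T jrr_T_prob p rho s T = 1.
Proof.
rewrite (sum_ffun_prod_pairs s_pairing (fun _ => pmf)).
by rewrite big1 // => i _; rewrite pair_pmf_sum.
Qed.

Lemma jrr_T_prob_marginal j b :
  \sum_T jrr_T_prob p rho s T * (T j == b)%:R = if b then p else 1 - p.
Proof.
pose W i a c : R :=
  if i == j then (a == b)%:R else if i == s j then (c == b)%:R else 1.
have indicatorE (T : {ffun 'I_n -> bool}) :
    (T j == b)%:R = \prod_(i : 'I_n | (i < s i)%N) W i (T i) (T (s i)).
  symmetry; apply: (prod_pairing_at (j := j) s_pairing) => i _; rewrite /W /=.
  have [-> // | _] := eqVneq i j.
  by have [-> | _] := eqVneq i (s j); rewrite ?pairingK.
under eq_bigr do rewrite indicatorE /jrr_T_prob -big_split /=.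
rewrite (sum_ffun_prod_pairs s_pairing (fun i a c => pmf a c * W i a c)).
apply: (prod_pairing_at (j := j) s_pairing) => i _; rewrite /W /=.
have [_ | _] := eqVneq i j; first by rewrite pair_pmf_fst.
have [_ | _] := eqVneq i (s j); first by rewrite pair_pmf_snd.
by under eq_bigr do under eq_bigr do rewrite mulr1; rewrite pair_pmf_sum.
Qed.

Lemma expected_count_reports (x : {ffun 'I_n -> bool}) v :
  \sum_T jrr_T_prob p rho s T * (count_reports x T v)%:R
  = (count_values x v)%:R * (p - (1 - p)) + n%:R * (1 - p).
Proof.
rewrite /count_reports /count_values natr_card_set.
under eq_bigr do rewrite natr_card_set mulr_sumr.
rewrite exchange_big /=.
under eq_bigr do under eq_bigr do rewrite jrr_report_eq.
under eq_bigr do rewrite jrr_T_prob_marginal.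
have marginalE (c : bool) : (if c then p else 1 - p) = c%:R * (p - (1 - p)) + (1 - p).
  by case: c => /=; ring.
under eq_bigr do rewrite marginalE.
by rewrite big_split /= -mulr_suml sumr_const card_ord mulr_natl.
Qed.

End JRR.

Lemma estimator_unbiased_given_pairing (R : fieldType) n (p rho : R)
    (s : {perm 'I_n}) (x : {ffun 'I_n -> bool}) v :
  is_pairing s -> p - (1 - p) != 0 ->
  \sum_T jrr_T_prob p rho s T
           * (((count_reports x T v)%:R - n%:R * (1 - p)) / (p - (1 - p)))
  = (count_values x v)%:R.
Proof.
move=> s_pairing p_neq_q.
under eq_bigr do rewrite mulrA mulrBr.
rewrite -big_distrl /= sumrB -big_distrl /= jrr_T_prob_sum // mul1r.
by rewrite expected_count_reports // addrK mulfK.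
Qed.

Lemma pairings_nonempty n : ~~ odd n -> (0 < #|pairings n|)%N.
Proof.
case: n => [|m] n_even.
  by apply/card_gt0P; exists 1%g; rewrite inE; apply/forallP => -[i i_lt0].
pose g (i : 'I_m.+1) : 'I_m.+1 := inord (if odd i then i.-1 else i.+1).
have gE i : nat_of_ord (g i) = (if odd i then i.-1 else i.+1).
  rewrite inordK //; case: ifP => i_odd; first by have := ltn_ord i; lia.
  rewrite ltn_neqAle ltn_ord andbT; apply/eqP => i_max.
  by move: n_even; rewrite -i_max /= i_odd.
have gK : involutive g.
  move=> i; apply: val_inj; rewrite /= !gE.
  by case: (nat_of_ord i) => [|k] //=; case k_odd: (odd k); rewrite /= ?k_odd.
apply/card_gt0P; exists (perm (inv_inj gK)); rewrite inE; apply/forallP => i.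
rewrite !permE gK eqxx -val_eqE /= gE.
by case: (nat_of_ord i) => [|k] //=; case: (odd k) => /=; lia.
Qed.

Lemma jrr_expect_const (R : numFieldType) n (p rho : R) X c :
  ~~ odd n ->
  (forall s, s \in pairings n -> \sum_T jrr_T_prob p rho s T * X s T = c) ->
  jrr_expect p rho X = c.
Proof.
move=> n_even X_c; rewrite /jrr_expect (eq_bigr _ X_c) sumr_const.
by rewrite -[c *+ _]mulr_natl mulKf // pnatr_eq0 -lt0n pairings_nonempty.
Qed.

Theorem theorem1 (R : realFieldType) (n : nat) (p rho : R)
  (x : {ffun 'I_n -> bool}) (v : bool) :
  ~~ odd n ->
  1 / 2 < p <= 1 ->
  1 - p^-1 <= rho <= 1 ->
  jrr_expect p rho
    (fun _ T => ((count_reports x T v)%:R - n%:R * (1 - p)) / (p - (1 - p)))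
  = (count_values x v)%:R.
Proof.
(* The remaining bounds only make the law of T nonnegative. *)
move=> n_even /andP[p_gt_half _] _.
have p_neq_q : p - (1 - p) != 0 by rewrite gt_eqF //; lra.
apply: jrr_expect_const => // s; rewrite inE => s_pairing.
exact: estimator_unbiased_given_pairing.
Qed.
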